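(* Let $\mathbf{A}'$ be an $n\times d$ matrix, $k\ge 1$, $\varepsilon\in(0,1)$, and suppose the maximum coverage optimum $\mathbf{OPT}$ of $\mathbf{A}'$ with $k$ subsets satisfies $\mathbf{OPT}\le C_1\, k\log d/\varepsilon^2$ for a constant $C_1$. Then the total number of nonzero entries among small items of $\mathbf{A}'$ is $O(d\log d/\varepsilon^2)$.
   Context: Item $i$ belongs to subset (column) $j$ iff $A'_{ij}\neq 0$. $\mathbf{OPT}$ is the maximum over sets of $k$ columns of the number of rows having a nonzero entry in at least one of those columns. An item (row) is small if it has fewer than $d/k$ nonzero entries. The implied constant in $O(\cdot)$ depends only on $C_1$. *)

From mathcomp Require Import all_boot all_order all_algebra.
From mathcomp Require Import all_classical all_reals all_analysis.
Set Implicit Arguments. Unset Strict Implicit. Unset Printing Implicit Defensive.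
Import Order.TTheory GRing.Theory Num.Theory.
Local Open Scope ring_scope.

Section Coverage.
Variables (R : numDomainType) (n d : nat).

(* the row/item i belongs to column/subset j iff A i j <> 0 *)
Definition row_support (A : 'M[R]_(n, d)) (i : 'I_n) : {set 'I_d} :=
  [set j | A i j != 0].

Definition coverage (A : 'M[R]_(n, d)) (S : {set 'I_d}) : nat :=
  #|[set i : 'I_n | [exists j in S, A i j != 0]]|.

Definition OPT (A : 'M[R]_(n, d)) (k : nat) : nat :=
  (\max_(S : {set 'I_d} | #|S| <= k) coverage A S)%N.

(* item i is small: fewer than d/k nonzero entries, i.e. nnz * k < d *)
Definition small_item (A : 'M[R]_(n, d)) (k : nat) (i : 'I_n) : bool :=
  (#|row_support A i| * k < d)%N.

Definition small_nnz (A : 'M[R]_(n, d)) (k : nat) : nat :=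
  (\sum_(i | small_item A k i) #|row_support A i|)%N.
End Coverage.

From mathcomp Require Import all_boot all_order all_algebra.
From mathcomp Require Import all_classical all_reals all_analysis.
From mathcomp Require Import zify ring.
Import Order.TTheory GRing.Theory Num.Theory.

(* Choose k columns at random with repetition, i.e. a uniform map f : 'I_k -> 'I_d,
   and count instead of averaging over the d ^ k maps. The image of f covers at most
   OPT rows, while a row with s nonzero entries is hit by a fraction 1 - (1 - s/d)^k
   of the maps, which is at least ks/(2d) when ks <= d. Summing over the small rows
   gives k * small_nnz <= 2 d OPT, and the hypothesis on OPT concludes. *)

Lemma expn_bernoulli (d s k : nat) : d ^ k * (d + k * s) <= d * (d + s) ^ k.
Proof.
elim: k => [|k IH]; first by rewrite !expn0 mul0n addn0 muln1 mul1n.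
rewrite expnS [in leqRHS]expnS mulnCA; apply: leq_trans (leq_mul (leqnn _) IH).
nia.
Qed.

Lemma expn_sub_bernoulli (d s k : nat) : s <= d -> (d - s) ^ k * (d + k * s) <= d ^ k.+1.
Proof.
have [->|d_gt0] := posnP d; first by rewrite leqn0 => /eqP->; rewrite !muln0.
move=> le_sd.
rewrite -(@leq_pmul2l (d ^ k)) ?expn_gt0 ?d_gt0 // mulnCA.
apply: leq_trans (leq_mul (leqnn _) (expn_bernoulli d s k)) _.
have : (d - s) ^ k * (d + s) ^ k <= d ^ k * d ^ k.
  by rewrite -!expnMn; case: k => [|k] //; rewrite leq_exp2r //; nia.
rewrite expnS; nia.
Qed.

(* With x = s/d: (1 - x)^k <= 1/(1 + kx), so 1 - (1 - x)^k >= kx/(1 + kx) >= kx/2. *)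
Lemma subn_expn_lower (d s k : nat) : k * s <= d ->
  k * s * d ^ k <= 2 * d * (d ^ k - (d - s) ^ k).
Proof.
have [->|k_gt0] := posnP k; first by rewrite !mul0n.
move=> le_ks_d; have le_sd : s <= d by nia.
have le_QP : (d - s) ^ k <= d ^ k by rewrite leq_exp2r ?leq_subr.
have := @expn_sub_bernoulli d s k le_sd; rewrite expnS.
move: le_QP; set P := d ^ k; set Q := (d - s) ^ k => le_QP bern.
have : k * s * (P - Q) <= d * (P - Q) by rewrite leq_mul2r le_ks_d orbT.
nia.
Qed.

Lemma card_set_sum (T : finType) (P : pred T) : #|[set x | P x]| = \sum_x P x.
Proof. by rewrite -sum1_card big_mkcond; apply: eq_bigr => x _; rewrite inE; case: (P x). Qed.

Lemma sum_card_set_exchange (I J : finType) (Q : I -> J -> bool) :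
  \sum_j #|[set i | Q i j]| = \sum_i #|[set j | Q i j]|.
Proof.
under eq_bigr do rewrite card_set_sum.
by rewrite exchange_big; apply: eq_bigr => i _; rewrite card_set_sum.
Qed.

Lemma card_ffun_hitting (aT rT : finType) (S : {set rT}) :
  #|[set f : {ffun aT -> rT} | [exists x, f x \in S]]| =
  #|rT| ^ #|aT| - (#|rT| - #|S|) ^ #|aT|.
Proof.
set hit := [set f | _].
have missing : #|~: hit| = #|~: S| ^ #|aT|.
  rewrite -card_ffun_on; apply: eq_card => f; rewrite !inE negb_exists.
  by apply/forallP/ffun_onP => f_miss x; have := f_miss x; rewrite inE.
have compl_S : #|~: S| = #|rT| - #|S| by rewrite -(cardsC S) addKn.
by rewrite -compl_S -missing -card_ffun -(cardsC hit) addnK.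
Qed.

Section SmallItems.
Variables (R : numDomainType) (n d : nat) (A : 'M[R]_(n, d)).

Lemma coverage_le_OPT k (S : {set 'I_d}) : #|S| <= k -> coverage A S <= OPT A k.
Proof. exact: (leq_bigmax_cond S (F := coverage A)). Qed.

Lemma covered_by_image k (f : {ffun 'I_k -> 'I_d}) i :
  [exists j in [set f x | x in 'I_k], A i j != 0%R] = [exists x, f x \in row_support A i].
Proof.
apply/existsP/existsP => [[_ /andP[/imsetP[x _ ->] Aix]] | [x Aix]].
  by exists x; rewrite inE.
by exists (f x); rewrite imset_f //; move: Aix; rewrite inE.
Qed.

Lemma sum_coverage_images k :
  \sum_(f : {ffun 'I_k -> 'I_d}) coverage A [set f x | x in 'I_k] =
  \sum_i (d ^ k - (d - #|row_support A i|) ^ k).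
Proof.
rewrite /coverage sum_card_set_exchange; apply: eq_bigr => i _.
under eq_finset do rewrite covered_by_image.
by rewrite card_ffun_hitting !card_ord.
Qed.

Lemma sum_hits_le_OPT k :
  \sum_i (d ^ k - (d - #|row_support A i|) ^ k) <= d ^ k * OPT A k.
Proof.
rewrite -sum_coverage_images.
apply: (@leq_trans (\sum_(f : {ffun 'I_k -> 'I_d}) OPT A k)).
  apply: leq_sum => f _; apply: coverage_le_OPT.
  by apply: leq_trans (leq_imset_card _ _) _; rewrite card_ord.
by rewrite sum_nat_const card_ffun !card_ord.
Qed.

Lemma small_nnz_le_OPT k : 0 < k -> k * small_nnz A k <= 2 * d * OPT A k.
Proof.
move=> k_gt0; have [d_eq0|d_gt0] := posnP d.
  rewrite /small_nnz big_pred0 ?muln0 // => i; apply/negbTE; rewrite -leqNgt.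
  exact: leq_trans (eq_leq d_eq0) (leq0n _).
rewrite -(@leq_pmul2r (d ^ k)) ?expn_gt0 ?d_gt0 // [leqRHS]mulnAC -[leqRHS]mulnA.
apply: leq_trans (leq_mul (leqnn _) (sum_hits_le_OPT k)).
rewrite /small_nnz big_distrr big_distrl big_distrr /=.
rewrite [leqRHS](bigID (small_item A k)) /=; apply: leq_trans (leq_addr _ _).
apply: leq_sum => i small_i; apply: subn_expn_lower.
by rewrite mulnC ltnW.
Qed.

End SmallItems.

Local Open Scope ring_scope.

Theorem lemma9 (R : realType) (C1 : R) (hC1 : 0 < C1) :
  exists C : R, 0 < C /\
  forall (n d k : nat) (eps : R) (A : 'M[R]_(n, d)),
    (1 <= k)%N -> 0 < eps < 1 ->
    ((OPT A k)%:R <= C1 * k%:R * ln d%:R / eps ^+ 2) ->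
    (small_nnz A k)%:R <= C * d%:R * ln d%:R / eps ^+ 2.
Proof.
exists (2 * C1); split; first by rewrite mulr_gt0.
move=> n d k eps A k_gt0 _ OPT_le.
have k_pos : (0 : R) < k%:R by rewrite ltr0n.
rewrite -(ler_pM2l k_pos); apply: le_trans (_ : 2 * d%:R * (OPT A k)%:R <= _).
  by rewrite -!natrM ler_nat small_nnz_le_OPT.
have -> : k%:R * (2 * C1 * d%:R * ln d%:R / eps ^+ 2) =
          2 * d%:R * (C1 * k%:R * ln d%:R / eps ^+ 2) by ring.
by rewrite ler_wpM2l // mulr_ge0 // ler0n.
Qed.
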